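(* Let $N\ge1$ clients; for each client $i$ let $x^i\in\mathbb{R}^d$ be a random feature vector with $\mathbb{E}[x^ix^{i\top}]=H$ (the same for all $i$), let $\varepsilon^i$ be a real random variable independent of $x^i$ with $\mathbb{E}[\varepsilon^i]=0$, $\mathbb{E}[(\varepsilon^i)^2]=\sigma^2$, and let $w_*^1,\dots,w_*^N\in\mathbb{R}^d$ with $w_*=\frac1N\sum_iw_*^i$. Assume there is $\kappa>0$ such that for all $i$ and all $z\in\mathbb{R}^d$, $\mathbb{E}[\langle z,x^i\rangle^4]\le\kappa\langle z,Hz\rangle^2$. Let $\Theta_i=\mathbb{E}[g_*^i(g_*^i)^\top]$ with $g_*^i=(x^ix^{i\top})(w_*-w_*^i)+x^i\varepsilon^i$, and let $W_*$ be uniform on $\{w_*^i:i\in\{1,\dots,N\}\}$, so $\mathrm{Cov}(W_* )=\frac1N\sum_i(w_*-w_*^i)(w_*-w_*^i)^\top$. Then $$\frac1N\sum_{i=1}^N\Theta_i\preccurlyeq\big(\kappa\,\mathrm{Tr}(H\,\mathrm{Cov}(W_* ))+\sigma^2\big)H.$$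
   Context: $A\preccurlyeq B$ means $B-A$ is positive semi-definite. *)

From HB Require Import structures.
From mathcomp Require Import all_boot all_order all_algebra.
From mathcomp Require Import all_classical all_reals all_analysis.
Set Implicit Arguments. Unset Strict Implicit. Unset Printing Implicit Defensive.
Import Order.TTheory GRing.Theory Num.Theory.
Local Open Scope classical_set_scope.
Local Open Scope ring_scope.

Definition psd (R : realType) (d : nat) (M : 'M[R]_d) : Prop :=
  M^T = M /\ forall z : 'cV[R]_d, 0 <= (z^T *m M *m z) 0 0.

Definition loewner_le (R : realType) (d : nat) (A B : 'M[R]_d) : Prop :=
  psd (B - A).

(* Entrywise expectation of a random matrix (the entries are real numbers;
   'fine' is only used to return to R, integrability is ensured by the
   hypotheses of the theorem). *)
Definition Emx (dT : measure_display) (T : measurableType dT) (R : realType)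
  (P : probability T R) (m n : nat) (M : T -> 'M[R]_(m, n)) : 'M[R]_(m, n) :=
  \matrix_(j, k) fine ('E_P[fun t => M t j k])%E.

(* Independence of a random vector x (with values in R^d) and a real random
   variable e: the events {x in A_1 x ... x A_d} and {e in B} are independent
   for all Borel sets A_j, B (measurable rectangles generate the product
   sigma-algebra and form a pi-system, so this is independence of
   sigma(x) and sigma(e)). *)
Definition indep_vec_rv (dT : measure_display) (T : measurableType dT)
  (R : realType) (P : probability T R) (d : nat)
  (x : T -> 'cV[R]_d) (e : T -> R) : Prop :=
  forall (A : 'I_d -> set R) (B : set R),
    (forall j, measurable (A j)) -> measurable B ->
    P ([set t | forall j, A j (x t j ord0)] `&` (e @^-1` B)) =
    (P [set t | forall j, A j (x t j ord0)] * P (e @^-1` B))%E.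

Definition wmean (R : realType) (N d : nat) (ws : 'I_N -> 'cV[R]_d) : 'cV[R]_d :=
  N%:R^-1 *: \sum_(i < N) ws i.

Definition CovW (R : realType) (N d : nat) (ws : 'I_N -> 'cV[R]_d) : 'M[R]_d :=
  N%:R^-1 *: \sum_(i < N) ((wmean ws - ws i) *m (wmean ws - ws i)^T).

Definition gstar (R : realType) (N d : nat) (ws : 'I_N -> 'cV[R]_d) (i : 'I_N)
  (xi : 'cV[R]_d) (ei : R) : 'cV[R]_d :=
  (xi *m xi^T) *m (wmean ws - ws i) + ei *: xi.

Definition Theta (dT : measure_display) (T : measurableType dT) (R : realType)
  (P : probability T R) (N d : nat) (ws : 'I_N -> 'cV[R]_d)
  (x : 'I_N -> T -> 'cV[R]_d) (eps : 'I_N -> T -> R) (i : 'I_N) : 'M[R]_d :=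
  Emx P (fun t => gstar ws i (x i t) (eps i t) *m (gstar ws i (x i t) (eps i t))^T).

From HB Require Import structures.
From mathcomp Require Import all_boot all_order all_algebra.
From mathcomp Require Import all_classical all_reals all_analysis.
From mathcomp Require Import ring lra measurable_realfun.
Import Order.TTheory GRing.Theory Num.Theory.
Local Open Scope classical_set_scope.
Local Open Scope ring_scope.
Set Implicit Arguments. Unset Strict Implicit. Unset Printing Implicit Defensive.

(* Write v_i = w_* - w_*^i.  Since g_*^i = <v_i, x> x + eps x, for every direction z
   we have z^T Theta_i z = E[<z,x>^2 (<v_i,x> + eps)^2].  Expanding the square, the
   cross term E[<z,x>^2 <v_i,x> eps] vanishes because eps is centred and independent
   of x, the last term factorises into sigma^2 z^T H z, and by Cauchy-Schwarz and the
   fourth-moment assumption E[<z,x>^2 <v_i,x>^2] <= kappa (z^T H z) (v_i^T H v_i).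
   Averaging over the clients, (1/N) sum_i v_i^T H v_i = Tr(H CovW).
   Independence is only assumed on coordinate rectangles; a pi-lambda argument extends
   it to the sigma-algebra of x, and Fubini-Tonelli on the joint law then gives
   E[F(x) G(eps)] = E[F(x)] E[G(eps)]. *)

Section quadratic_forms.
Variables (R : comRingType) (n : nat).
Implicit Types (z w : 'cV[R]_n) (A : 'M[R]_n).

Definition vdot z w := (z^T *m w) 0 0.
Definition qform A z := (z^T *m A *m z) 0 0.

Lemma vdotE z w : vdot z w = \sum_j z j 0 * w j 0.
Proof. by rewrite /vdot mxE; apply: eq_bigr => j _; rewrite mxE. Qed.

Lemma vdotC z w : vdot z w = vdot w z.
Proof. by rewrite !vdotE; apply: eq_bigr => j _; rewrite mulrC. Qed.

Lemma vdot_delta j w : vdot (delta_mx j 0) w = w j 0.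
Proof.
rewrite vdotE (bigD1 j) //= mxE !eqxx mul1r big1 ?addr0 // => k kj.
by rewrite mxE (negbTE kj) mul0r.
Qed.

Lemma outer_mxE w j k : (w *m w^T) j k = w j 0 * w k 0.
Proof. by rewrite mxE big_ord1 mxE. Qed.

Lemma qformE A z : qform A z = \sum_j \sum_k z j 0 * z k 0 * A j k.
Proof.
rewrite /qform mxE; under eq_bigr do rewrite mxE big_distrl /=.
rewrite exchange_big /=; apply: eq_bigr => j _; apply: eq_bigr => k _.
by rewrite !mxE; ring.
Qed.

Lemma qformB A B z : qform (A - B) z = qform A z - qform B z.
Proof. by rewrite /qform mulmxBr mulmxBl !mxE. Qed.

Lemma qformZ c A z : qform (c *: A) z = c * qform A z.
Proof. by rewrite /qform -scalemxAr -scalemxAl !mxE. Qed.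

Lemma qform_sum (I : finType) (A : I -> 'M[R]_n) z :
  qform (\sum_i A i) z = \sum_i qform (A i) z.
Proof. by rewrite /qform mulmx_sumr mulmx_suml summxE. Qed.

Lemma qform_outer z w : qform (w *m w^T) z = vdot z w ^+ 2.
Proof.
rewrite /qform mulmxA -mulmxA mxE big_ord1.
by rewrite -[w^T *m z]trmxK trmx_mul trmxK [(_^T) 0 0]mxE expr2.
Qed.

Lemma vdot_outer_mul_add z w v c :
  vdot z ((w *m w^T) *m v + c *: w) = vdot z w * (vdot v w + c).
Proof.
rewrite -mulmxA [w^T *m v]mx11_scalar mul_mx_scalar -scalerDl.
by rewrite {1}/vdot -scalemxAr mxE -/(vdot w v) vdotC mulrC.
Qed.

Lemma mxtrace_mul_outer A w : \tr (A *m (w *m w^T)) = qform A w.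
Proof. by rewrite mulmxA mxtrace_mulC /mxtrace big_ord1 mulmxA. Qed.

End quadratic_forms.

Notation Rintegrable mu f := (mu.-integrable setT (EFin \o f)).

Section Rintegral_lemmas.
Context d (T : measurableType d) (R : realType) (mu : {measure set T -> \bar R}).
Implicit Types f g : T -> R.

Lemma RintegrableM_sqr f g : measurable_fun setT f -> measurable_fun setT g ->
  Rintegrable mu (fun t => f t ^+ 2) -> Rintegrable mu (fun t => g t ^+ 2) ->
  Rintegrable mu (fun t => f t * g t).
Proof.
move=> mf mg if2 ig2.
apply: (le_integrable measurableT _ _ (integrableD measurableT if2 ig2)).
  exact/measurable_EFinP/measurable_funM.
move=> t _; rewrite /= lee_fin normrM (@ger0_norm _ (_ + _)) ?addr_ge0 ?sqr_ge0 //.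
rewrite -(real_normK (num_real (f t))) -(real_normK (num_real (g t))).
by have := sqr_ge0 (`|f t| - `|g t|); have := normr_ge0 (f t); nra.
Qed.

Lemma Rintegral_sum (I : Type) (s : seq I) (F : I -> T -> R) :
  (forall i, Rintegrable mu (F i)) ->
  Rintegrable mu (fun t => \sum_(i <- s) F i t) /\
  \int[mu]_t (\sum_(i <- s) F i t) = \sum_(i <- s) \int[mu]_t F i t.
Proof.
move=> iF; elim: s => [|i s [iS IH]].
  have -> : (fun t => \sum_(i <- [::]) F i t) = cst 0.
    by apply/funext => t; rewrite big_nil.
  rewrite big_nil Rintegral_cst // mul0r; split => //; exact: integrable0.
have -> : (fun t => \sum_(j <- i :: s) F j t) =
    (fun t => F i t + \sum_(j <- s) F j t).
  by apply/funext => t; rewrite big_cons.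
rewrite big_cons RintegralD // IH.
by split => //; exact: (integrableD measurableT (iF i) iS).
Qed.

(* The quadratic r |-> \int (r f - g)^2 is nonnegative, so its discriminant is not positive. *)
Lemma Rintegral_Cauchy_Schwarz f g : measurable_fun setT f -> measurable_fun setT g ->
  Rintegrable mu (fun t => f t ^+ 2) -> Rintegrable mu (fun t => g t ^+ 2) ->
  (\int[mu]_t (f t * g t)) ^+ 2 <= \int[mu]_t (f t ^+ 2) * \int[mu]_t (g t ^+ 2).
Proof.
move=> mf mg if2 ig2; have ifg := RintegrableM_sqr mf mg if2 ig2.
set a := \int[mu]_t (f t ^+ 2); set b := \int[mu]_t (f t * g t).
set c := \int[mu]_t (g t ^+ 2).
pose p : {poly R} := Poly [:: c; - (2 * b); a].
have p2_ge0 : 0 <= p`_2.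
  by rewrite coef_Poly; apply: Rintegral_ge0 => t _; exact: sqr_ge0.
have p_ge0 r : 0 <= p.[r].
  have -> : p.[r] = \int[mu]_t ((r * f t - g t) ^+ 2).
    have -> : (fun t => (r * f t - g t) ^+ 2) =
        (fun t => r ^+ 2 * f t ^+ 2 - (2 * r) * (f t * g t) + g t ^+ 2).
      by apply/funext => t; ring.
    have i1 := integrableZl measurableT (r ^+ 2) if2.
    have i2 := integrableZl measurableT (2 * r) ifg.
    rewrite RintegralD // ?RintegralB //; last exact: (integrableB measurableT i1 i2).
    by rewrite !RintegralZl // -/a -/b -/c horner_Poly /= mul0r add0r; ring.
  by apply: Rintegral_ge0 => t _; exact: sqr_ge0.
have := @deg_le2_poly_delta_ge0 R p (size_Poly _) p2_ge0 p_ge0.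
by rewrite !coef_Poly /=; lra.
Qed.

End Rintegral_lemmas.

Section uncorrelated.
Context d (T : measurableType d) (R : realType) (mu : {measure set T -> \bar R}).
Implicit Types f g : T -> R.

Definition uncorrelated f g := Rintegrable mu (fun t => f t * g t) /\
  \int[mu]_t (f t * g t) = \int[mu]_t f t * \int[mu]_t g t.

Lemma uncorrelatedC f g : uncorrelated f g -> uncorrelated g f.
Proof.
have fgC : (fun t => f t * g t) = (fun t => g t * f t).
  by apply/funext => t; rewrite mulrC.
by rewrite /uncorrelated fgC mulrC.
Qed.

Lemma uncorrelatedBl f1 f2 g : Rintegrable mu f1 -> Rintegrable mu f2 ->
  uncorrelated f1 g -> uncorrelated f2 g -> uncorrelated (f1 - f2) g.
Proof.
move=> if1 if2 [i1 E1] [i2 E2]; rewrite /uncorrelated.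
have -> : (fun t => (f1 - f2) t * g t) = (fun t => f1 t * g t - f2 t * g t).
  by apply/funext => t; rewrite mulrBl.
split; first exact: (integrableB measurableT i1 i2).
rewrite [LHS](RintegralB measurableT i1 i2) /= E1 E2 -mulrBl.
by rewrite -(RintegralB measurableT if1 if2).
Qed.

Lemma uncorrelatedBr f g1 g2 : Rintegrable mu g1 -> Rintegrable mu g2 ->
  uncorrelated f g1 -> uncorrelated f g2 -> uncorrelated f (g1 - g2).
Proof.
move=> ig1 ig2 /uncorrelatedC h1 /uncorrelatedC h2.
by apply/uncorrelatedC/uncorrelatedBl.
Qed.

End uncorrelated.

Section coordinate_rectangles.
Context d (T : measurableType d) (R : realType) (n : nat) (x : T -> 'cV[R]_n).

Definition coord_rectangles : set (set T) := [set S | exists A : 'I_n -> set R,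
  (forall j, measurable (A j)) /\ S = [set t | forall j, A j (x t j 0)]].

Lemma coord_rectangles_setI_closed : setI_closed coord_rectangles.
Proof.
move=> _ _ [A [mA ->]] [B [mB ->]]; exists (fun j => A j `&` B j); split.
  by move=> j; exact: measurableI.
apply/seteqP; split => t /=; first by move=> [tA tB] j.
by move=> tAB; split => j; case: (tAB j).
Qed.

Hypothesis mx : forall j, measurable_fun setT (fun t => x t j 0).

Local Notation sigma_x := (g_sigma_algebraType coord_rectangles).

Lemma sigma_coord_measurable : <<s coord_rectangles >> `<=` measurable.
Proof.
apply: smallest_sub; first exact: sigma_algebra_measurable.
move=> _ [A [mA ->]].
have -> : [set t | forall j, A j (x t j 0)] =
    \bigcap_(j in setT) ((fun t => x t j 0) @^-1` A j).
  by apply/seteqP; split => t /= h j; [move=> _|]; apply: h.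
apply: fin_bigcap_measurable; first exact: finite_finset.
by move=> j _; rewrite -[X in measurable X]setTI; exact: mx.
Qed.

Lemma measurable_fun_sigma_coord : measurable_fun setT (fun t : T => t : sigma_x).
Proof. by move=> _ A mA; rewrite setTI; exact: sigma_coord_measurable. Qed.

Lemma sigma_coord_measurable_coord j :
  measurable_fun (setT : set sigma_x) (fun t => x t j 0).
Proof.
move=> _ B mB; rewrite setTI; apply: sub_sigma_algebra.
exists (fun k => if k == j then B else setT); split; first by move=> k; case: ifP.
apply/seteqP; split => t /=; last by move=> /(_ j); rewrite eqxx.
by move=> Bt k; case: ifP => // /eqP ->.
Qed.

End coordinate_rectangles.

Section independence.
Context d (T : measurableType d) (R : realType) (P : probability T R) (n : nat)
  (x : T -> 'cV[R]_n) (e : T -> R).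
Hypothesis mx : forall j, measurable_fun setT (fun t => x t j 0).
Hypothesis me : measurable_fun setT e.
Hypothesis xe_indep : indep_vec_rv P x e.

Local Notation sigma_x := (g_sigma_algebraType (coord_rectangles x)).

Lemma sigma_coord_indep (B : set R) : measurable B ->
  forall S, <<s coord_rectangles x >> S ->
  P (S `&` e @^-1` B) = (P S * P (e @^-1` B))%E.
Proof.
move=> mB; have meB : measurable (e @^-1` B).
  by rewrite -[X in measurable X]setTI; exact: me.
have finP (S : set T) : measurable S -> P S \is a fin_num by exact: fin_num_measure.
apply: (@dynkin_induction _ sigma_x (coord_rectangles x)) => //.
- exact: coord_rectangles_setI_closed.
- by rewrite setTI probability_setT mul1e.
- by move=> _ [A [mA ->]]; exact: xe_indep.
- move=> S mS PS; have mST : measurable (S : set T) := sigma_coord_measurable mx mS.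
  rewrite setIC -setDE measureD //; last first.
    exact: le_lt_trans (probability_le1 P meB) (ltry 1).
  rewrite [X in (_ - X)%E](_ : _ = P (S `&` e @^-1` B)); last by rewrite setIC.
  by rewrite PS probability_setC // muleBl ?finP // mul1e.
- move=> F mF tF PF; have mFT k := sigma_coord_measurable mx (mF k).
  rewrite setI_bigcupl !measure_bigcup //; last 2 first.
  + by move=> k _; exact: measurableI.
  + apply/trivIsetP => i j _ _ ij; rewrite setIACA setIid.
    by move/trivIsetP: tF => /(_ i j I I ij) ->; rewrite set0I.
  rewrite -(fineK (finP _ meB)) muleC -nneseriesZl //.
  apply: eq_eseriesr => k _; rewrite -[LHS]/(P (F k `&` e @^-1` B)) PF.
  by rewrite fineK ?finP // muleC.
Qed.

Let id_x : {mfun T >-> sigma_x} := HB.pack (fun t : T => t : sigma_x)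
  (isMeasurableFun.Build _ _ _ _ _ (measurable_fun_sigma_coord mx)).
Let e_mfun : {mfun T >-> R} := HB.pack e (isMeasurableFun.Build _ _ _ _ _ me).
Let measurable_pair : measurable_fun setT (fun t : T => (t : sigma_x, e t)).
Proof. exact: measurable_fun_pair (measurable_fun_sigma_coord mx) me. Qed.
Let pair_xe : {mfun T >-> (sigma_x * R)%type} := HB.pack
  (fun t : T => (t : sigma_x, e t)) (isMeasurableFun.Build _ _ _ _ _ measurable_pair).

Let distribution_pair_indep (X : set (sigma_x * R)) : measurable X ->
  (distribution P id_x \x distribution P e_mfun)%E X = distribution P pair_xe X.
Proof. by apply: product_measure_unique => A B mA mB; exact: sigma_coord_indep. Qed.

Lemma ge0_integral_indepM (F : T -> R) (G : R -> R) :
  measurable_fun (setT : set sigma_x) F -> measurable_fun setT G ->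
  (forall t, 0 <= F t) -> (forall r, 0 <= G r) ->
  (\int[P]_t (F t * G (e t))%:E = \int[P]_t (F t)%:E * \int[P]_t (G (e t))%:E)%E.
Proof.
move=> mF mG F0 G0.
have mFE : measurable_fun (setT : set sigma_x) (EFin \o F) by exact/measurable_EFinP.
have mGE : measurable_fun setT (EFin \o G) by exact/measurable_EFinP.
pose f (p : sigma_x * R) := (F p.1 * G p.2)%:E.
have mf : measurable_fun setT f.
  apply/measurable_EFinP; apply: measurable_funM.
    exact: measurableT_comp mF measurable_fst.
  exact: measurableT_comp mG measurable_snd.
have f0 p : (0 <= f p)%E by rewrite lee_fin mulr_ge0.
transitivity (\int[distribution P pair_xe]_p f p)%E.
  by rewrite ge0_integral_distribution.
rewrite -(eq_measure_integral _ (fun A mA _ => distribution_pair_indep mA)).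
rewrite fubini_tonelli1 //.
have inner a : (\int[distribution P e_mfun]_r f (a, r) =
    (F a)%:E * \int[distribution P e_mfun]_r (G r)%:E)%E.
  by rewrite -ge0_integralZl ?lee_fin // => r _; rewrite lee_fin.
under eq_integral do rewrite /fubini_F inner.
rewrite ge0_integralZr //; last 2 first.
- by move=> a _; rewrite lee_fin.
- by apply: integral_ge0 => r _; rewrite lee_fin.
by rewrite !ge0_integral_distribution // => a; rewrite lee_fin.
Qed.

Let measurable_fun_of_sigma_coord (F : T -> R) :
  measurable_fun (setT : set sigma_x) F -> measurable_fun setT F.
Proof. by move=> mF; exact: measurableT_comp mF (measurable_fun_sigma_coord mx). Qed.

Lemma uncorrelated_indep_ge0 (F : T -> R) (G : R -> R) :
  measurable_fun (setT : set sigma_x) F -> measurable_fun setT G ->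
  (forall t, 0 <= F t) -> (forall r, 0 <= G r) ->
  Rintegrable P F -> Rintegrable P (G \o e) -> uncorrelated P F (G \o e).
Proof.
move=> mF mG F0 G0 iF iG; have E := ge0_integral_indepM mF mG F0 G0.
have fF := integrable_fin_num measurableT iF.
have fG := integrable_fin_num measurableT iG.
split; last by rewrite /Rintegral E fineM.
apply/integrableP; split.
  apply/measurable_EFinP/measurable_funM; first exact: measurable_fun_of_sigma_coord.
  exact: measurableT_comp mG me.
under eq_integral do rewrite /= ger0_norm ?mulr_ge0 //.
by rewrite E -(fineK fF) -(fineK fG) -EFinM ltry.
Qed.

Lemma uncorrelated_indep (F : T -> R) (G : R -> R) :
  measurable_fun (setT : set sigma_x) F -> measurable_fun setT G ->
  Rintegrable P F -> Rintegrable P (G \o e) -> uncorrelated P F (G \o e).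
Proof.
move=> mF mG iF iG.
have -> : G \o e = (G^\+ \o e) - (G^\- \o e).
  by apply/funext => t; exact: (congr1 (fun h => h (e t)) (esym (funrposBneg G))).
rewrite -(funrposBneg F).
have iFp := integrable_funrpos measurableT iF.
have iFn := integrable_funrneg measurableT iF.
have iGp := integrable_funrpos measurableT iG.
have iGn := integrable_funrneg measurableT iG.
have [mFp mFn] := conj (measurable_funrpos mF) (measurable_funrneg mF).
have [mGp mGn] := conj (measurable_funrpos mG) (measurable_funrneg mG).
apply: uncorrelatedBl => //; apply: uncorrelatedBr => //.
all: exact: uncorrelated_indep_ge0.
Qed.

End independence.

Section random_matrices.
Context d (T : measurableType d) (R : realType) (P : probability T R).

Lemma Rintegrable_of_sqr (f : T -> R) : measurable_fun setT f ->
  Rintegrable P (fun t => f t ^+ 2) -> Rintegrable P f.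
Proof.
move=> mf if2.
have i1 : Rintegrable P (fun t => (cst 1 : T -> R) t ^+ 2).
  by rewrite /= expr1n; exact: finite_measure_integrable_cst.
have := RintegrableM_sqr mf (measurable_cst _) if2 i1.
by under eq_fun do rewrite /= mulr1.
Qed.

Lemma Rintegral_expectation (f : T -> R) : \int[P]_t f t = fine 'E_P[f].
Proof. by rewrite unlock. Qed.

Lemma EmxE m p (M : T -> 'M[R]_(m, p)) j k : Emx P M j k = \int[P]_t M t j k.
Proof. by rewrite mxE Rintegral_expectation. Qed.

Lemma Emx_sym n (M : T -> 'M[R]_n) :
  (forall t, (M t)^T = M t) -> (Emx P M)^T = Emx P M.
Proof.
move=> Msym; apply/matrixP => j k; rewrite mxE !EmxE.
by apply: eq_Rintegral => t _; rewrite -[in RHS]Msym mxE.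
Qed.

Lemma qform_Emx n (M : T -> 'M[R]_n) z :
  (forall j k, Rintegrable P (fun t => M t j k)) ->
  qform (Emx P M) z = \int[P]_t qform (M t) z.
Proof.
move=> iM.
have iZ j k : Rintegrable P (fun t => z j 0 * z k 0 * M t j k).
  exact: (integrableZl measurableT (z j 0 * z k 0) (iM j k)).
have iRow j : Rintegrable P (fun t => \sum_k z j 0 * z k 0 * M t j k).
  exact: (Rintegral_sum _ (iZ j)).1.
transitivity (\sum_j \int[P]_t \sum_k z j 0 * z k 0 * M t j k).
  rewrite qformE; apply: eq_bigr => j _; rewrite (Rintegral_sum _ (iZ j)).2.
  by apply: eq_bigr => k _; rewrite EmxE RintegralZl.
by rewrite -(Rintegral_sum _ iRow).2; apply: eq_Rintegral => t _; rewrite qformE.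
Qed.

End random_matrices.

Section one_client.
Context d (T : measurableType d) (R : realType) (P : probability T R) (n : nat)
  (x : T -> 'cV[R]_n) (e : T -> R) (H : 'M[R]_n) (sigma kappa : R).
Hypothesis mx : forall j, measurable_fun setT (fun t => x t j 0).
Hypothesis me : measurable_fun setT e.
Hypothesis xe_indep : indep_vec_rv P x e.
Hypothesis Exx : forall j k, ('E_P[fun t => (x t j 0 * x t k 0)%R] = (H j k)%:E)%E.
Hypothesis Ee : ('E_P[e] = 0)%E.
Hypothesis Ee2 : ('E_P[fun t => (e t ^+ 2)%R] = (sigma ^+ 2)%:E)%E.
Hypothesis kappa_ge0 : 0 <= kappa.
Hypothesis moment4 : forall z,
  ('E_P[fun t => (vdot z (x t) ^+ 4)%R] <= (kappa * qform H z ^+ 2)%:E)%E.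

Local Notation sigma_x := (g_sigma_algebraType (coord_rectangles x)).
Let y z t := vdot z (x t).

Let measurable_y z : measurable_fun (setT : set sigma_x) (y z).
Proof.
rewrite (_ : y z = fun t => \sum_j z j 0 * x t j 0); last first.
  by apply/funext => t; rewrite /y vdotE.
apply: measurable_sum => j; apply: measurable_funM; first exact: measurable_cst.
exact: sigma_coord_measurable_coord.
Qed.

Let measurable_yT z : measurable_fun setT (y z).
Proof. exact: measurableT_comp (measurable_y z) (measurable_fun_sigma_coord mx). Qed.

Let measurable_y2 z : measurable_fun (setT : set sigma_x) (fun t => y z t ^+ 2).
Proof. exact: measurable_funX (measurable_y z). Qed.

Let measurable_y2T z : measurable_fun setT (fun t => y z t ^+ 2).
Proof. exact: measurable_funX (measurable_yT z). Qed.

Let integrable_y4 z : Rintegrable P (fun t => (y z t ^+ 2) ^+ 2).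
Proof.
apply/integrableP; split; first exact/measurable_EFinP/measurable_funX.
under eq_integral do rewrite /= ger0_norm ?sqr_ge0 // -exprM.
by apply: le_lt_trans (ltry (kappa * qform H z ^+ 2)); move: (moment4 z); rewrite unlock.
Qed.

Let integrable_y2 z : Rintegrable P (fun t => y z t ^+ 2).
Proof. exact: Rintegrable_of_sqr (measurable_y2T z) (integrable_y4 z). Qed.

Let integrable_e2 : Rintegrable P (fun t => e t ^+ 2).
Proof.
apply/integrableP; split; first by apply/measurable_EFinP; exact: measurable_funX.
under eq_integral do rewrite /= ger0_norm ?sqr_ge0 //.
by move: Ee2; rewrite unlock => ->; exact: ltry.
Qed.

Let integrable_e : Rintegrable P e.
Proof. exact: Rintegrable_of_sqr me integrable_e2. Qed.

Let Rintegral_e : \int[P]_t e t = 0.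
Proof. by rewrite Rintegral_expectation Ee. Qed.

Let Rintegral_e2 : \int[P]_t (e t ^+ 2) = sigma ^+ 2.
Proof. by rewrite Rintegral_expectation Ee2. Qed.

Lemma Emx_outer_x : Emx P (fun t => x t *m (x t)^T) = H.
Proof.
apply/matrixP => j k; rewrite mxE.
by under eq_fun do rewrite outer_mxE; rewrite Exx.
Qed.

Lemma H_sym : H^T = H.
Proof. by rewrite -Emx_outer_x; apply: Emx_sym => t; rewrite trmx_mul trmxK. Qed.

Lemma Rintegral_vdot_sqr z : \int[P]_t (y z t ^+ 2) = qform H z.
Proof.
rewrite -Emx_outer_x qform_Emx.
  by apply: eq_Rintegral => t _; rewrite qform_outer.
move=> j k; under eq_fun do rewrite outer_mxE -!vdot_delta.
exact: RintegrableM_sqr (measurable_yT _) (measurable_yT _) (integrable_y2 _) (integrable_y2 _).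
Qed.

Lemma Rintegral_vdot_sqrM_le z v :
  \int[P]_t (y z t ^+ 2 * y v t ^+ 2) <= kappa * qform H z * qform H v.
Proof.
have qH_ge0 w : 0 <= qform H w.
  by rewrite -Rintegral_vdot_sqr; apply: Rintegral_ge0 => t _; exact: sqr_ge0.
have Ey4 w : \int[P]_t ((y w t ^+ 2) ^+ 2) <= kappa * qform H w ^+ 2.
  rewrite -lee_fin /Rintegral fineK ?(integrable_fin_num measurableT (integrable_y4 w)) //.
  by under eq_integral do rewrite /= -exprM; move: (moment4 w); rewrite unlock.
have Ey4_ge0 w : 0 <= \int[P]_t ((y w t ^+ 2) ^+ 2).
  by apply: Rintegral_ge0 => t _; exact: sqr_ge0.
have CS := Rintegral_Cauchy_Schwarz (measurable_y2T z) (measurable_y2T v)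
  (integrable_y4 z) (integrable_y4 v).
have AB := ler_pM (Ey4_ge0 z) (Ey4_ge0 v) (Ey4 z) (Ey4 v).
have K_ge0 : 0 <= kappa * qform H z * qform H v by rewrite !mulr_ge0.
have : (\int[P]_t (y z t ^+ 2 * y v t ^+ 2)) ^+ 2 <=
    (kappa * qform H z * qform H v) ^+ 2.
  have -> : (kappa * qform H z * qform H v) ^+ 2 =
    kappa * qform H z ^+ 2 * (kappa * qform H v ^+ 2) by ring.
  exact: le_trans CS AB.
by move: K_ge0; set c := \int[P]_t _; set K := kappa * _ * _; nra.
Qed.

Lemma Rintegral_vdot_noise_sqr z v :
  Rintegrable P (fun t => (y z t * (y v t + e t)) ^+ 2) /\
  \int[P]_t ((y z t * (y v t + e t)) ^+ 2) =
    \int[P]_t (y z t ^+ 2 * y v t ^+ 2) + qform H z * sigma ^+ 2.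
Proof.
have i22 := RintegrableM_sqr (measurable_y2T z) (measurable_y2T v)
  (integrable_y4 z) (integrable_y4 v).
have [i21 E21] : uncorrelated P (fun t => y z t ^+ 2 * y v t) e.
  apply: (uncorrelated_indep mx me xe_indep (G := id)) => //.
    exact: measurable_funM (measurable_y2 z) (measurable_y v).
  exact: RintegrableM_sqr (measurable_y2T z) (measurable_yT v)
    (integrable_y4 z) (integrable_y2 v).
have [i20 E20] : uncorrelated P (fun t => y z t ^+ 2) (fun t => e t ^+ 2).
  exact: (uncorrelated_indep mx me xe_indep (measurable_y2 z) (exprn_measurable 2)
    (integrable_y2 z) integrable_e2).
have -> : (fun t => (y z t * (y v t + e t)) ^+ 2) = (fun t =>
    y z t ^+ 2 * y v t ^+ 2 + 2 * (y z t ^+ 2 * y v t * e t) + y z t ^+ 2 * e t ^+ 2).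
  by apply/funext => t; ring.
have i2 := integrableZl measurableT 2 i21.
have i222 := integrableD measurableT i22 i2.
split; first exact: (integrableD measurableT i222 i20).
rewrite !RintegralD // RintegralZl // E21 E20 Rintegral_vdot_sqr.
by rewrite Rintegral_e Rintegral_e2 mulr0 mulr0 addr0.
Qed.

Let g v t := (x t *m (x t)^T) *m v + e t *: x t.

Lemma Emx_gradient_sym v :
  (Emx P (fun t => g v t *m (g v t)^T))^T = Emx P (fun t => g v t *m (g v t)^T).
Proof. by apply: Emx_sym => t; rewrite trmx_mul trmxK. Qed.

Lemma qform_Emx_gradient_le v z :
  qform (Emx P (fun t => g v t *m (g v t)^T)) z <=
    (kappa * qform H v + sigma ^+ 2) * qform H z.
Proof.
rewrite qform_Emx; last first.
  move=> j k; under eq_fun do rewrite outer_mxE -!vdot_delta /g !vdot_outer_mul_add.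
  have mg l : measurable_fun setT (fun t => y l t * (y v t + e t)).
    exact: measurable_funM (measurable_yT l) (measurable_funD (measurable_yT v) me).
  by apply: RintegrableM_sqr; [exact: mg|exact: mg
    |exact: (Rintegral_vdot_noise_sqr _ v).1|exact: (Rintegral_vdot_noise_sqr _ v).1].
under eq_Rintegral do rewrite qform_outer /g vdot_outer_mul_add.
rewrite (Rintegral_vdot_noise_sqr z v).2 mulrDl [sigma ^+ 2 * _]mulrC lerD2r.
by rewrite [leRHS]mulrAC; exact: Rintegral_vdot_sqrM_le.
Qed.

End one_client.

Lemma loewner_le_mean (R : realType) (n N : nat) (A : 'I_N -> 'M[R]_n)
    (H : 'M[R]_n) (a : 'I_N -> R) :
  H^T = H -> (forall i, (A i)^T = A i) ->
  (forall i z, qform (A i) z <= a i * qform H z) ->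
  loewner_le (N%:R^-1 *: \sum_i A i) ((N%:R^-1 * \sum_i a i) *: H).
Proof.
move=> Hsym Asym Ale; split.
  rewrite linearB /= !linearZ /= Hsym linear_sum /=.
  by congr (_ + _ *: - _); apply: eq_bigr => i _; exact: Asym.
move=> z; rewrite -/(qform _ z) qformB !qformZ qform_sum subr_ge0 -mulrA mulr_suml.
by rewrite ler_wpM2l ?invr_ge0 ?ler0n //; apply: ler_sum => i _; exact: Ale.
Qed.

Lemma mxtrace_mul_CovW (R : realType) (N n : nat) (H : 'M[R]_n)
    (ws : 'I_N -> 'cV[R]_n) :
  \tr (H *m CovW ws) = N%:R^-1 * \sum_i qform H (wmean ws - ws i).
Proof.
rewrite /CovW -scalemxAr mxtraceZ mulmx_sumr raddf_sum /=.
by under eq_bigr do rewrite mxtrace_mul_outer.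
Qed.

Theorem proposition5 (dT : measure_display) (T : measurableType dT)
  (R : realType) (P : probability T R) (N d : nat)
  (x : 'I_N -> T -> 'cV[R]_d) (eps : 'I_N -> T -> R)
  (H : 'M[R]_d) (ws : 'I_N -> 'cV[R]_d) (sigma kappa : R) :
  (0 < N)%N ->
  (forall i j, measurable_fun setT (fun t => x i t j ord0)) ->
  (forall i, measurable_fun setT (eps i)) ->
  (forall i j k, ('E_P[fun t => (x i t j ord0 * x i t k ord0)%R])%E = (H j k)%:E) ->
  (forall i, indep_vec_rv P (x i) (eps i)) ->
  (forall i, ('E_P[eps i])%E = 0%E) ->
  (forall i, ('E_P[fun t => (eps i t ^+ 2)%R])%E = (sigma ^+ 2)%:E) ->
  0 < kappa ->
  (forall i (z : 'cV[R]_d),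
     ('E_P[fun t => (((z^T *m x i t) ord0 ord0) ^+ 4)%R])%E
       <= (kappa * ((z^T *m H *m z) ord0 ord0) ^+ 2)%:E)%E ->
  loewner_le (N%:R^-1 *: \sum_(i < N) Theta P ws x eps i)
             ((kappa * \tr (H *m CovW ws) + sigma ^+ 2) *: H).
Proof.
move=> N_gt0 mx meps Exx indep Eeps Eeps2 kappa_gt0 moment4.
have -> : kappa * \tr (H *m CovW ws) + sigma ^+ 2 =
    N%:R^-1 * \sum_i (kappa * qform H (wmean ws - ws i) + sigma ^+ 2).
  rewrite mxtrace_mul_CovW big_split /= sumr_const card_ord -mulr_sumr mulrDr mulrCA.
  congr (_ + _); rewrite -[sigma ^+ 2 *+ N]mulr_natl mulrA mulVf ?mul1r //.
  by rewrite pnatr_eq0 -lt0n.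
apply: loewner_le_mean => [|i|i z].
- exact: H_sym (Exx (Ordinal N_gt0)).
- exact: Emx_gradient_sym.
- exact: (qform_Emx_gradient_le (mx i) (meps i) (indep i) (Exx i) (Eeps i) (Eeps2 i)
    (ltW kappa_gt0) (moment4 i)).
Qed.
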